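(* Let $L, S, M$ be positive integers and $n = 3L$. Let $\mathbf{D}\in\mathbb{R}^{n\times S}$ and $\mathbf{U}\in\mathbb{R}^{M\times S}$ be real matrices, and let $\mathbf{W}\in\mathbb{R}^{n\times n}$ be a diagonal matrix with nonnegative diagonal entries. Define $$\mathbf{A}=\frac{1}{S}\mathbf{D}\mathbf{D}^\mathsf{T},\qquad \mathbf{P}=\begin{bmatrix}\mathbf{D}\\ \mathbf{U}\end{bmatrix}\in\mathbb{R}^{(n+M)\times S},\qquad \widetilde{\mathbf{A}}=\frac{1}{S}\mathbf{P}\mathbf{P}^\mathsf{T},\qquad \widetilde{\mathbf{W}}=\begin{bmatrix}\mathbf{W}&\mathbf{0}\\ \mathbf{0}&\mathbf{0}_{M\times M}\end{bmatrix},\qquad \mathbf{C}=\frac{1}{S}\mathbf{U}\mathbf{D}^\mathsf{T}.$$ Then: (i) for every $\lambda$, $\det(\widetilde{\mathbf{A}}\widetilde{\mathbf{W}}-\lambda\mathbf{I}_{n+M})=(-\lambda)^M\det(\mathbf{A}\mathbf{W}-\lambda\mathbf{I}_n)$; hence the eigenvalues of $\widetilde{\mathbf{A}}\widetilde{\mathbf{W}}$ (with algebraic multiplicity) are exactly the eigenvalues of $\mathbf{A}\mathbf{W}$ together with $M$ additional zero eigenvalues; (ii) if $\mathbf{z}\neq\mathbf{0}$ satisfies $\mathbf{A}\mathbf{W}\mathbf{z}=\lambda\mathbf{z}$ with $\lambda\neq 0$, then the vector $\begin{bmatrix}\mathbf{z}\\ \mathbf{v}\end{bmatrix}$ with $\mathbf{v}=\lambda^{-1}\mathbf{C}\mathbf{W}\mathbf{z}$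 satisfies $\widetilde{\mathbf{A}}\widetilde{\mathbf{W}}\begin{bmatrix}\mathbf{z}\\ \mathbf{v}\end{bmatrix}=\lambda\begin{bmatrix}\mathbf{z}\\ \mathbf{v}\end{bmatrix}$; conversely, if $\begin{bmatrix}\mathbf{q}\\ \mathbf{v}\end{bmatrix}\neq\mathbf{0}$ (with $\mathbf{q}\in\mathbb{R}^n$, $\mathbf{v}\in\mathbb{R}^M$) is an eigenvector of $\widetilde{\mathbf{A}}\widetilde{\mathbf{W}}$ with eigenvalue $\lambda\neq0$, then $\mathbf{q}\neq\mathbf{0}$, $\mathbf{A}\mathbf{W}\mathbf{q}=\lambda\mathbf{q}$, and $\mathbf{v}=\lambda^{-1}\mathbf{C}\mathbf{W}\mathbf{q}$.
   Context: This compares the weighted principal component analysis of a data matrix $\mathbf{D}$ of (centered) discretized shape-modification vectors (eigenproblem of $\mathbf{A}\mathbf{W}$, ''KLE'') with that of the augmented matrix $\mathbf{P}$ obtained by appending the (centered) design-variable samples $\mathbf{U}$ with zero weight (eigenproblem of $\widetilde{\mathbf{A}}\widetilde{\mathbf{W}}$, ''parametric model embedding''). The element-measure matrix is taken to be the identity. *)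

From HB Require Import structures.
From mathcomp Require Import all_boot all_order all_algebra.
Set Implicit Arguments. Unset Strict Implicit. Unset Printing Implicit Defensive.
Import Order.TTheory GRing.Theory Num.Theory.
Local Open Scope ring_scope.

Section KLE.
Variables (R : realFieldType) (L S M : nat).
Local Notation n := (3 * L)%N.

Definition KLE_A (D : 'M[R]_(n, S)) : 'M[R]_n := (S%:R)^-1 *: (D *m D^T).
Definition PME_P (D : 'M[R]_(n, S)) (U : 'M[R]_(M, S)) : 'M[R]_(n + M, S) :=
  col_mx D U.
Definition PME_A (D : 'M[R]_(n, S)) (U : 'M[R]_(M, S)) : 'M[R]_(n + M) :=
  (S%:R)^-1 *: (PME_P D U *m (PME_P D U)^T).
Definition PME_W (W : 'M[R]_n) : 'M[R]_(n + M) := block_mx W 0 0 (0 : 'M[R]_M).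
Definition PME_C (D : 'M[R]_(n, S)) (U : 'M[R]_(M, S)) : 'M[R]_(M, n) :=
  (S%:R)^-1 *: (U *m D^T).
End KLE.

From HB Require Import structures.
From mathcomp Require Import all_boot all_order all_algebra.
Import Order.TTheory GRing.Theory Num.Theory.
Local Open Scope ring_scope.

(* Because the design variables carry zero weight, the embedded matrix
   factors as A~ W~ = [[A W, 0], [C W, 0]]: lower block-triangular with a
   vanishing lower-right block.  Its characteristic polynomial is therefore
   X^M times that of A W, and for lambda != 0 an eigenvector [z; v] is
   determined by z, which must be an eigenvector of A W, via lambda v = C W z. *)

Section LowerBlockZero.
Variables (R : comNzRingType) (n m : nat) (B : 'M[R]_n) (C : 'M[R]_(m, n)).

Local Notation T := (block_mx B 0 C (0 : 'M[R]_m)).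

Lemma det_lblock0_sub_scalar (lambda : R) :
  \det (T - lambda%:M) = (- lambda) ^+ m * \det (B - lambda%:M).
Proof.
rewrite (scalar_mx_block n m) opp_block_mx add_block_mx !oppr0 !addr0 add0r.
by rewrite det_lblock -(raddfN (@scalar_mx R m)) det_scalar mulrC.
Qed.

Lemma char_poly_lblock0 : char_poly T = 'X ^+ m * char_poly B.
Proof.
rewrite /char_poly /char_poly_mx map_block_mx !map_mx0 (scalar_mx_block n m).
by rewrite opp_block_mx add_block_mx !oppr0 !addr0 det_lblock det_scalar mulrC.
Qed.

Lemma mul_lblock0_col (z : 'cV[R]_n) (v : 'cV[R]_m) :
  T *m col_mx z v = col_mx (B *m z) (C *m z).
Proof. by rewrite mul_block_col !mul0mx !addr0. Qed.

End LowerBlockZero.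

Lemma lblock0_eigenvectorP (F : fieldType) (n m : nat)
    (B : 'M[F]_n) (C : 'M[F]_(m, n)) (z : 'cV[F]_n) (v : 'cV[F]_m) (lambda : F) :
  lambda != 0 ->
  (block_mx B 0 C (0 : 'M_m) *m col_mx z v == lambda *: col_mx z v)
    = (B *m z == lambda *: z) && (v == lambda^-1 *: (C *m z)).
Proof.
move=> lambda_neq0; rewrite mul_lblock0_col scale_col_mx.
apply/eqP/andP => [/eq_col_mx [-> Cz] | [/eqP -> /eqP ->]].
  by rewrite Cz scalerA mulVf // scale1r eqxx.
by rewrite scalerA mulfV // scale1r.
Qed.

Lemma mul_col_mx_tr_block0 (R : comPzRingType) (n m s : nat)
    (D : 'M[R]_(n, s)) (U : 'M[R]_(m, s)) (W : 'M[R]_n) :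
  col_mx D U *m (col_mx D U)^T *m block_mx W 0 0 (0 : 'M_m)
    = block_mx (D *m D^T *m W) 0 (U *m D^T *m W) 0.
Proof. by rewrite tr_col_mx mul_col_row mulmx_block !mulmx0 !addr0. Qed.

Lemma PME_AW_block (R : realFieldType) (L S M : nat)
    (D : 'M[R]_(3 * L, S)) (U : 'M[R]_(M, S)) (W : 'M[R]_(3 * L)) :
  PME_A D U *m PME_W M W = block_mx (KLE_A D *m W) 0 (PME_C D U *m W) 0.
Proof.
rewrite /PME_A /PME_W /PME_P -scalemxAl mul_col_mx_tr_block0 scale_block_mx.
by rewrite !scaler0 -!scalemxAl.
Qed.

Theorem mainTheorem1 (R : realFieldType) (L S M : nat)
  (hL : (0 < L)%N) (hS : (0 < S)%N) (hM : (0 < M)%N)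
  (D : 'M[R]_(3 * L, S)) (U : 'M[R]_(M, S)) (W : 'M[R]_(3 * L))
  (hWdiag : is_diag_mx W) (hWnonneg : forall i, 0 <= W i i) :
  let A := KLE_A D in
  let At := PME_A D U in
  let Wt := PME_W M W in
  let C := PME_C D U in
  (* (i) *)
  ((forall lambda : R,
      \det (At *m Wt - lambda%:M) = (- lambda) ^+ M * \det (A *m W - lambda%:M))
   /\ char_poly (At *m Wt) = 'X ^+ M * char_poly (A *m W))
  /\
  (* (ii) *)
  ((forall (z : 'cV[R]_(3 * L)) (lambda : R),
      z != 0 -> lambda != 0 -> A *m W *m z = lambda *: z ->
      let v := lambda^-1 *: (C *m W *m z) in
      At *m Wt *m col_mx z v = lambda *: col_mx z v)
   /\
   (forall (q : 'cV[R]_(3 * L)) (v : 'cV[R]_M) (lambda : R),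
      col_mx q v != 0 -> lambda != 0 ->
      At *m Wt *m col_mx q v = lambda *: col_mx q v ->
      [/\ q != 0, A *m W *m q = lambda *: q & v = lambda^-1 *: (C *m W *m q)])).
Proof.
move=> A At Wt C; rewrite {}/At {}/Wt PME_AW_block -/A -/C.
split; first by split; [exact: det_lblock0_sub_scalar | exact: char_poly_lblock0].
split=> [z lambda _ lambda_neq0 AWz | q v lambda qv_neq0 lambda_neq0].
  by apply/eqP; rewrite lblock0_eigenvectorP // AWz !eqxx.
move/eqP; rewrite lblock0_eigenvectorP //; case/andP => /eqP AWq /eqP def_v.
split=> //; apply: contraTneq qv_neq0 => q0.
by rewrite negbK col_mx_eq0 def_v q0 mulmx0 scaler0 !eqxx.
Qed.
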